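(* Let $c$ be a real number with $2<c<4$. There exists $k(c)$ such that for every integer $k>k(c)$ for which $n=ck$ is an integer, there is an intersecting family $\mathcal F\subset\binom{[n]}{k}$ with $$|\mathcal D(\mathcal F)|>\sum_{0\le \ell<k}\binom{n-1}{\ell}.$$
   Context: $[n]=\{1,\dots,n\}$; $\binom{[n]}{k}$ is the family of all $k$-element subsets of $[n]$. A family $\mathcal F$ is intersecting if $F\cap F'\neq\varnothing$ for all $F,F'\in\mathcal F$. $\mathcal D(\mathcal F):=\{F\setminus F' : F,F'\in\mathcal F\}$. *)

From mathcomp Require Import all_boot.
From Stdlib Require Import Reals.
Set Implicit Arguments. Unset Strict Implicit. Unset Printing Implicit Defensive.

Definition uniform (n k : nat) (F : {set {set 'I_n}}) : bool :=
  [forall A in F, #|A| == k].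

Definition intersecting (n : nat) (F : {set {set 'I_n}}) : bool :=
  [forall A in F, forall B in F, A :&: B != set0].

Definition diffs (n : nat) (F : {set {set 'I_n}}) : {set {set 'I_n}} :=
  [set A :\: B | A in F, B in F].

From mathcomp Require Import all_boot zify.
From Stdlib Require Import Reals Lra ZArith.

(* We use the Hilton-Milner family: fix x0 in [n] and a k-set G avoiding x0,
   and let F consist of G and of all k-sets containing x0 and meeting G.  It is
   k-uniform and intersecting, and its difference family D(F) contains
   (i)  every set of size < k avoiding x0, except the (k-1)-subsets of the
        n-k-1 points outside x0 |: G, and
   (ii) every set x0 |: B with B a set of size < k-1 outside x0 |: G.
   Hence |D(F)| + C(n-k-1, k-1) >= \sum_(l<k) C(n-1, l) + \sum_(j<k-1) C(n-k-1, j),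
   and it suffices that C(N, k-1) < \sum_(j<k-1) C(N, j) for N = n-k-1.
   As N is about (c-1)k < 3k, the ratio C(N,j)/C(N,j+1) = (j+1)/(N-j) stays
   above some (w+1)/(2w+1) > 1/2 for the last t values of j below k-1, where
   (w+1)^(t+1) < (2w+1)^t; summing the resulting geometric lower bounds gives
   the binomial estimate. *)

(* Importing the reals rebinds [^]; restore the natural-number power. *)
Notation "m ^ n" := (expn m n) : nat_scope.

Lemma bernoulli_expn a s : a ^ s * (a + s) <= a.+1 ^ s * a.
Proof.
elim: s => [|s IHs]; first by rewrite !expn0 addn0 mul1n.
rewrite !expnS; apply: (@leq_trans (a.+1 * (a ^ s * (a + s)))); first by nia.
by rewrite -mulnA leq_mul2l IHs orbT.
Qed.

(* ((2w+1)/(w+1))^t eventually exceeds w+1: as (2w+1)/(w+1) >= 1 + 1/(w+1),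
   Bernoulli's inequality with t = (w+1)^2 gives (w+2)^t > (w+1)^(t+1). *)
Lemma exists_power_gap w : 0 < w -> exists t, w.+1 ^ t.+1 < (2 * w + 1) ^ t.
Proof.
move=> w_gt0; exists (w.+1 ^ 2).
set a := w.+1; set s := a ^ 2.
have s_gt0 : 0 < a ^ s by rewrite expn_gt0.
have gap : a ^ s.+1 * a < a.+1 ^ s * a.
  apply: leq_trans (bernoulli_expn a s); rewrite expnS /s; nia.
rewrite ltn_pmul2r // in gap.
by apply: (leq_trans gap); rewrite leq_exp2r ?expn_gt0 //; lia.
Qed.

(* mixed_sum u v s = u v^(s-1) + u^2 v^(s-2) + ... + u^s. *)
Fixpoint mixed_sum (u v s : nat) : nat :=
  if s is s'.+1 then v * mixed_sum u v s' + u ^ s'.+1 else 0.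

Lemma mixed_sumE u d s :
  mixed_sum u (u + d) s * d + u ^ s.+1 = u * (u + d) ^ s.
Proof.
elim: s => [|s IHs] /=; first by rewrite expn1 expn0 muln1.
rewrite [u ^ s.+2]expnS [(u + d) ^ s.+1]expnS.
move: IHs; move: (mixed_sum _ _ s) (u ^ s.+1) ((u + d) ^ s) => M P V IHs.
nia.
Qed.

Lemma mixed_sum_gt w t : 0 < w -> w.+1 ^ t.+1 < (2 * w + 1) ^ t ->
  (2 * w + 1) ^ t < mixed_sum w.+1 (2 * w + 1) t.
Proof.
move=> w_gt0 gap; have := mixed_sumE w.+1 w t.
have -> : w.+1 + w = 2 * w + 1 by lia.
move: gap; move: (mixed_sum _ _ t) (w.+1 ^ t.+1) ((2 * w + 1) ^ t) => M P V.
nia.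
Qed.

Lemma binomial_ratio_step N j u v : j < N -> u * (N - j) <= v * j.+1 ->
  'C(N, j.+1) * u <= 'C(N, j) * v.
Proof.
move=> ltjN ratio.
have Nj_gt0 : 0 < N - j by rewrite subn_gt0.
rewrite -(leq_pmul2r Nj_gt0).
have := mul_bin_left N j.
move: ratio; move: 'C(N, j.+1) 'C(N, j) (N - j) => C1 C0 d ratio E.
have : C1 * (u * d) <= C1 * (v * j.+1) by rewrite leq_mul2l ratio orbT.
nia.
Qed.

Lemma binomial_ratio_chain N m u v s : s <= m -> m <= N ->
  (forall j, m - s <= j -> j < m -> u * (N - j) <= v * j.+1) ->
  'C(N, m) * u ^ s <= 'C(N, m - s) * v ^ s /\
  'C(N, m) * mixed_sum u v s <= v ^ s * \sum_(m - s <= j < m) 'C(N, j).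
Proof.
elim: s => [|s IHs] le_sm le_mN ratio.
  by rewrite !expn0 !muln1 subn0 /= muln0.
have [IH1 IH2] : 'C(N, m) * u ^ s <= 'C(N, m - s) * v ^ s /\
    'C(N, m) * mixed_sum u v s <= v ^ s * \sum_(m - s <= j < m) 'C(N, j).
  by apply: IHs => [||j lej]; [lia | lia | apply: ratio; lia].
set j := m - s.+1.
have Emj : m - s = j.+1 by rewrite /j; lia.
have ltjm : j < m by rewrite /j; lia.
have step := @binomial_ratio_step N j u v (leq_trans ltjm le_mN) (ratio j (leqnn _) ltjm).
rewrite Emj in IH1 IH2; rewrite big_ltn //= !expnS.
have A := leq_mul (leqnn u) IH1.
have B := leq_mul step (leqnn (v ^ s)).
have C := leq_mul (leqnn v) IH2.
move: A B C; move: 'C(N, m) 'C(N, j) 'C(N, j.+1) (u ^ s) (v ^ s) (mixed_sum u v s)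
  (\sum_(j.+1 <= i < m) 'C(N, i)) => Cm Cj Cj1 us vs M S A B C.
split; nia.
Qed.

(* As (j+1)/(N-j) increases with j, the ratio is only assumed at j = m - t. *)
Lemma binomial_lt_lower_sum N m w t : 0 < w -> t <= m -> m <= N ->
  w.+1 ^ t.+1 < (2 * w + 1) ^ t ->
  w.+1 * (N - m + t) <= (2 * w + 1) * (m - t).+1 ->
  'C(N, m) < \sum_(0 <= j < m) 'C(N, j).
Proof.
move=> w_gt0 le_tm le_mN gap ratio_end.
have t_gt0 : 0 < t by case: (posnP t) gap => [->|//]; rewrite expn0 expn1 ltnS ltn0.
have ratio j : m - t <= j -> j < m -> w.+1 * (N - j) <= (2 * w + 1) * j.+1.
  move=> lej ltjm; apply: leq_trans (leq_trans ratio_end _); first by apply: leq_mul; lia.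
  by apply: leq_mul; lia.
have [_ chain] := binomial_ratio_chain N m w.+1 (2 * w + 1) t le_tm le_mN ratio.
have big_mixed := mixed_sum_gt w t w_gt0 gap.
have V_gt0 : 0 < (2 * w + 1) ^ t by rewrite expn_gt0; lia.
case: (posnP 'C(N, m)) => [-> | C_gt0]; first by rewrite big_ltn ?bin0 //; lia.
rewrite (@big_cat_nat _ _ _ (m - t)) ?leq_subr //=.
move: chain big_mixed V_gt0 C_gt0; move: 'C(N, m) (mixed_sum _ _ t) ((2 * w + 1) ^ t)
  (\sum_(m - t <= i < m) 'C(N, i)) => C M V S chain big_mixed V_gt0 C_gt0.
have : V * C < V * S by apply: leq_trans chain; rewrite mulnC ltn_pmul2l.
rewrite ltn_pmul2l // => ltCS; lia.
Qed.

Lemma cardsU_disjoint (T : finType) (A B : {set T}) :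
  [disjoint A & B] -> #|A :|: B| = #|A| + #|B|.
Proof. by move=> dAB; apply/eqP; rewrite (leq_card_setU A B).2. Qed.

Lemma card_small_subsets (T : finType) (S : {set T}) k :
  #|[set A : {set T} | A \subset S & #|A| < k]| = \sum_(0 <= l < k) 'C(#|S|, l).
Proof.
pose layer l := [set A : {set T} | A \subset S & #|A| == l].
elim: k => [|k IHk].
  rewrite big_geq //; apply/eqP; rewrite cards_eq0; apply/eqP/setP => A.
  by rewrite !inE ltn0 andbF.
have -> : [set A : {set T} | A \subset S & #|A| < k.+1] =
    [set A : {set T} | A \subset S & #|A| < k] :|: layer k.
  by apply/setP => A; rewrite !inE ltnS leq_eqVlt orbC andb_orr.
rewrite big_nat_recr //= -IHk -cards_draws cardsU_disjoint //.
rewrite -setI_eq0; apply/eqP/setP => A; rewrite !inE andbACA andbb.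
by case: ltngtP; rewrite ?andbF.
Qed.

Lemma exists_subset_card (T : finType) (S : {set T}) l : l <= #|S| ->
  exists B : {set T}, B \subset S /\ #|B| = l.
Proof.
move=> le_lS.
have : 0 < #|[set A : {set T} | A \subset S & #|A| == l]| by rewrite cards_draws bin_gt0.
by case/card_gt0P => B; rewrite inE => /andP[sBS /eqP cardB]; exists B.
Qed.

Lemma exists_subset_card_mem (T : finType) (S : {set T}) (g : T) l :
  g \in S -> 0 < l <= #|S| -> exists B : {set T}, [/\ B \subset S, #|B| = l & g \in B].
Proof.
move=> gS /andP[l_gt0 le_lS].
have [B [sBS cardB]] : exists B : {set T}, B \subset S :\ g /\ #|B| = l.-1.
  by apply: exists_subset_card; move: le_lS; rewrite (cardsD1 g S) gS; lia.
have gB : g \notin B by apply/negP => /(subsetP sBS); rewrite !inE eqxx.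
exists (g |: B); split; last by rewrite setU11.
- by rewrite subUset sub1set gS (subset_trans sBS) ?subsetDl.
- by rewrite cardsU1 gB cardB; lia.
Qed.

Lemma setDUl_cover (T : finType) (A E B : {set T}) :
  E \subset B -> [disjoint A & B] -> (A :|: E) :\: B = A.
Proof.
move=> sEB dAB; rewrite setDUl (setDidPl dAB).
by move: sEB; rewrite -setD_eq0 => /eqP ->; rewrite setU0.
Qed.

Section HiltonMilner.

Variables (n k : nat) (x0 : 'I_n) (G : {set 'I_n}).
Hypotheses (x0_notin_G : x0 \notin G) (card_G : #|G| = k).

Definition hilton_milner : {set {set 'I_n}} :=
  [set A : {set 'I_n} | (#|A| == k) && ((x0 \in A) && (A :&: G != set0) || (A == G))].

Definition outside : {set 'I_n} := ~: (x0 |: G).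

(* The family is k-uniform, and intersecting: two members through x0 share x0,
   and every other member meets G. *)
Lemma uniform_hilton_milner : uniform k hilton_milner.
Proof. by apply/forall_inP => A; rewrite inE => /andP[/eqP ->]. Qed.

Lemma intersecting_hilton_milner : 0 < k -> intersecting hilton_milner.
Proof.
move=> k_gt0; have G_neq0 : G != set0 by rewrite -card_gt0 card_G.
apply/forall_inP => A; rewrite inE => /andP[_ HA].
apply/forall_inP => B; rewrite inE => /andP[_ HB].
case/orP: HA => [/andP[x0A AG] | /eqP ->]; case/orP: HB => [/andP[x0B BG] | /eqP ->].
- by apply/set0Pn; exists x0; rewrite inE x0A x0B.
- exact: AG.
- by rewrite setIC.
- by rewrite setIid.
Qed.

Lemma hilton_milner_through_x0 (A : {set 'I_n}) :
  #|A| = k -> x0 \in A -> A :&: G != set0 -> A \in hilton_milner.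
Proof. by move=> cardA x0A AG; rewrite inE cardA eqxx x0A AG. Qed.

Lemma G_in_hilton_milner : G \in hilton_milner.
Proof. by rewrite inE card_G !eqxx orbT. Qed.

Lemma diff_in_diffs (A B : {set 'I_n}) :
  A \in hilton_milner -> B \in hilton_milner -> A :\: B \in diffs hilton_milner.
Proof. by move=> hA hB; apply: imset2_f. Qed.

Lemma card_outside : #|outside| = n - k - 1.
Proof.
have := cardsC (x0 |: G); rewrite cardsU1 x0_notin_G card_G card_ord /outside /=.
by move: #|~: _| => m; lia.
Qed.

Lemma outside_sub_setC1 : outside \subset [set~ x0].
Proof. by rewrite setCS sub1set setU11. Qed.

(* Differences of type (ii): x0 |: B with B a small subset of the outside, obtained
   as F :\: G for a member F = x0 |: B |: E with E filling up inside G. *)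
Lemma lifted_in_diffs (B : {set 'I_n}) :
  B \subset outside -> #|B| < k.-1 -> x0 |: B \in diffs hilton_milner.
Proof.
move=> sB_out card_B.
have sB_xG : x0 |: B \subset ~: G.
  rewrite subUset sub1set inE x0_notin_G (subset_trans sB_out) //.
  by rewrite setCS subsetUr.
have x0B : x0 \notin B.
  by apply/negP => /(subsetP (subset_trans sB_out outside_sub_setC1)); rewrite !inE eqxx.
have [E [sEG card_E]] : exists E : {set 'I_n}, E \subset G /\ #|E| = k - (#|B|).+1.
  by apply: exists_subset_card; rewrite card_G leq_subr.
have [g gE] : exists g, g \in E by apply/card_gt0P; rewrite card_E; lia.
have d_xB_E : [disjoint x0 |: B & E].
  by rewrite disjoints_subset subsetC (subset_trans sEG) // subsetC.
rewrite -(@setDUl_cover _ (x0 |: B) E G sEG); last by rewrite disjoints_subset.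
apply: diff_in_diffs G_in_hilton_milner; apply: hilton_milner_through_x0.
- by rewrite cardsU_disjoint // cardsU1 x0B card_E; lia.
- by rewrite !inE eqxx.
- by apply/set0Pn; exists g; rewrite !inE gE (subsetP sEG) ?orbT.
Qed.

(* For A avoiding x0 with |A| < k and g in G \ A, there is a (k-1)-set P
   through g avoiding A and x0: it consists of g and k-2 of the at least
   n - k - 1 points missing A, x0 and g. *)
Lemma exists_partner (A : {set 'I_n}) (g : 'I_n) : 2 <= k -> 2 * k + 1 <= n ->
  x0 \notin A -> #|A| < k -> g \in G -> g \notin A ->
  exists P : {set 'I_n}, [/\ g \in P, x0 \notin P, x0 |: P \subset ~: A & #|P| = k.-1].
Proof.
move=> k_ge2 n_ge x0A card_A gG gA.
have g_neq_x0 : g != x0 by apply: contraNneq x0_notin_G => <-.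
have [D [sD card_D]] : exists D : {set 'I_n}, D \subset ~: A :\ x0 :\ g /\ #|D| = k.-2.
  apply: exists_subset_card.
  have := cardsC A; rewrite card_ord (cardsD1 x0 (~: A)) (cardsD1 g (~: A :\ x0)).
  move: card_A n_ge; move: #|A| #|~: A :\ x0 :\ g| (x0 \in ~: A) (g \in ~: A :\ x0).
  by move=> a d [] [] /=; lia.
have D_fresh x : x \in D -> [/\ x != g, x != x0 & x \notin A].
  by move/(subsetP sD); rewrite !inE => /and3P[-> -> ->].
exists (g |: D); split.
- exact: setU11.
- by rewrite !inE eq_sym negb_or g_neq_x0; apply/negP => /D_fresh[_ /eqP].
- rewrite !subUset !sub1set !inE x0A gA; apply/subsetP => x /D_fresh[_ _].
  by rewrite inE.
- have gD : g \notin D by apply/negP => /D_fresh[/eqP].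
  by rewrite cardsU1 gD card_D add1n prednK // ltn_predRL.
Qed.

(* With g in G \ A and P as above, x0 |: P is a
   member, and A = F1 :\: (x0 |: P) for the member F1 = A :|: (x0 |: E), where
   E is a part of P of size k-1-|A| chosen so that F1 meets G. *)
Lemma small_in_diffs (A : {set 'I_n}) : 2 <= k -> 2 * k + 1 <= n ->
  x0 \notin A -> #|A| < k -> ~~ ((A \subset outside) && (#|A| == k.-1)) ->
  A \in diffs hilton_milner.
Proof.
move=> k_ge2 n_ge x0A card_A not_top.
have [g gG gA] : exists2 g, g \in G & g \notin A.
  by apply/subsetPn; apply/negP => /subset_leq_card; rewrite card_G; lia.
have [P [gP x0P sP_A card_P]] := @exists_partner A g k_ge2 n_ge x0A card_A gG gA.
have [E [sEP card_E [y yAE yG]]] : exists E : {set 'I_n},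
    [/\ E \subset P, #|E| = k.-1 - #|A| & exists2 y, y \in A :|: E & y \in G].
  have [AG | /set0Pn[y]] := eqVneq (A :&: G) set0; last first.
    have [E [sEP card_E]] := @exists_subset_card _ P (#|P| - #|A|) (leq_subr _ _).
    rewrite inE => /andP[yA yG]; exists E; rewrite card_E card_P.
    by split => //; exists y; rewrite // inE yA.
  have sA_out : A \subset outside.
    rewrite /outside subsetC subUset sub1set inE x0A -disjoints_subset.
    by rewrite disjoint_sym -setI_eq0 AG eqxx.
  have lt_A : #|A| < k.-1.
    rewrite ltn_neqAle -ltnS (prednK (ltnW k_ge2)) card_A andbT.
    by move: not_top; rewrite sA_out.
  have [E [sEP card_E gE]] := @exists_subset_card_mem _ P g (k.-1 - #|A|)
    gP ltac:(by rewrite card_P subn_gt0 lt_A leq_subr).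
  by exists E; split => //; exists g; rewrite // inE gE orbT.
have x0E : x0 \notin E by apply: contra x0P => /(subsetP sEP).
have sxE : x0 |: E \subset x0 |: P by apply: setUS.
rewrite -(@setDUl_cover _ A (x0 |: E) (x0 |: P) sxE); last first.
  by rewrite disjoints_subset subsetC.
apply: diff_in_diffs; apply: hilton_milner_through_x0.
- have le_A : #|A| <= k.-1 by rewrite -ltnS prednK // ltnW.
  rewrite cardsU_disjoint ?cardsU1 ?x0E ?card_E /=.
    by rewrite add1n addnS subnKC // prednK // ltnW.
  by rewrite disjoints_subset subsetC (subset_trans sxE).
- by rewrite !inE eqxx orbT.
- by apply/set0Pn; exists y; move: yAE; rewrite !inE yG => /orP[] ->; rewrite ?orbT.
- by rewrite cardsU1 x0P card_P add1n prednK // ltnW.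
- by rewrite !inE eqxx.
- by apply/set0Pn; exists g; rewrite !inE gP gG orbT.
Qed.

(* Counting D(F): it contains every set of size < k avoiding x0 except the
   (k-1)-subsets of the outside (which is why C(n-k-1, k-1) is added on the
   left), together with the sets x0 |: B for the B of size < k-1 in the outside. *)
Lemma card_diffs_hilton_milner : 2 <= k -> 2 * k + 1 <= n ->
  \sum_(0 <= l < k) 'C(n.-1, l) + \sum_(0 <= j < k.-1) 'C(n - k - 1, j)
    <= #|diffs hilton_milner| + 'C(n - k - 1, k.-1).
Proof.
move=> k_ge2 n_ge.
pose U := [set A : {set 'I_n} | A \subset [set~ x0] & #|A| < k].
pose L := [set A : {set 'I_n} | A \subset outside & #|A| == k.-1].
pose V := [set A : {set 'I_n} | A \subset outside & #|A| < k.-1].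
pose lift := [set x0 |: B | B in V].
have x0_out (B : {set 'I_n}) : B \subset outside -> x0 \notin B.
  move=> sB; apply/negP => /(subsetP (subset_trans sB outside_sub_setC1)).
  by rewrite !inE eqxx.
have sLU : L \subset U.
  apply/subsetP => A; rewrite !inE => /andP[sA /eqP ->].
  by rewrite (subset_trans sA outside_sub_setC1) ltn_predL; lia.
have sUL_diffs : U :\: L \subset diffs hilton_milner.
  apply/subsetP => A; rewrite !inE => /andP[notL /andP[sA card_A]].
  apply: small_in_diffs => //.
  by apply/negP => /(subsetP sA); rewrite !inE eqxx.
have slift_diffs : lift \subset diffs hilton_milner.
  apply/subsetP => A /imsetP[B]; rewrite inE => /andP[sB card_B] ->.
  exact: lifted_in_diffs.
have d_UL_lift : [disjoint U :\: L & lift].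
  rewrite -setI_eq0; apply/eqP/setP => A; rewrite !inE.
  apply/negP => /andP[/and3P[_ sA _] /imsetP[B _ eA]].
  by move/subsetP: sA => /(_ x0); rewrite eA !inE eqxx => /(_ isT).
have card_lift : #|lift| = #|V|.
  apply: card_in_imset => B1 B2; rewrite !inE => /andP[sB1 _] /andP[sB2 _] eqB.
  by rewrite -(setU1K (x0_out _ sB1)) -(setU1K (x0_out _ sB2)) eqB.
have card_U : #|U| = \sum_(0 <= l < k) 'C(n.-1, l).
  by rewrite card_small_subsets cardsC1 card_ord.
have card_V : #|V| = \sum_(0 <= j < k.-1) 'C(n - k - 1, j).
  by rewrite card_small_subsets card_outside.
have card_L : #|L| = 'C(n - k - 1, k.-1) by rewrite cards_draws card_outside.
rewrite -card_U -card_V -card_L -card_lift -(subnK (subset_leq_card sLU)) -cardsDS //.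
rewrite addnAC leq_add2r -cardsU_disjoint // subset_leq_card //.
by rewrite subUset sUL_diffs slift_diffs.
Qed.

End HiltonMilner.

Lemma hilton_milner_many_diffs n k : 2 <= k -> 2 * k + 1 <= n ->
  'C(n - k - 1, k.-1) < \sum_(0 <= j < k.-1) 'C(n - k - 1, j) ->
  exists F : {set {set 'I_n}},
    [/\ uniform k F, intersecting F & \sum_(0 <= l < k) 'C(n.-1, l) < #|diffs F| ].
Proof.
move=> k_ge2 n_ge top_small.
have n_gt0 : 0 < n by lia.
pose x0 := Ordinal n_gt0.
have [G [sG card_G]] : exists G : {set 'I_n}, G \subset [set~ x0] /\ #|G| = k.
  by apply: exists_subset_card; rewrite cardsC1 card_ord; lia.
have x0G : x0 \notin G by apply/negP => /(subsetP sG); rewrite !inE eqxx.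
exists (hilton_milner n k x0 G); split.
- exact: uniform_hilton_milner.
- by apply: intersecting_hilton_milner => //; lia.
have bound := @card_diffs_hilton_milner n k x0 G x0G card_G k_ge2 n_ge.
rewrite -(ltn_add2r (\sum_(0 <= j < k.-1) 'C(n - k - 1, j))).
by apply: leq_ltn_trans bound _; rewrite ltn_add2l.
Qed.

Lemma exists_nat_gt (r : R) : exists N : nat, (r < INR N)%R.
Proof.
have [up_gt _] := archimed r.
have [up_ge0 | up_lt0] := Z.le_gt_cases 0 (up r).
- by exists (Z.to_nat (up r)); rewrite INR_IZR_INZ Z2Nat.id //; lra.
- by exists 0; apply IZR_lt in up_lt0; simpl; lra.
Qed.

Lemma INR_muln a b : INR (a * b) = (INR a * INR b)%R.
Proof. by rewrite -multE mult_INR. Qed.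

Lemma INR_addn a b : INR (a + b) = (INR a + INR b)%R.
Proof. by rewrite -plusE plus_INR. Qed.

(* Since c < 4, some w > 0 satisfies (c-2)(w+1) < 2w+1, i.e. (4-c)(w+1) > 1. *)
Lemma exists_ratio_witness (c : R) : (2 < c < 4)%R ->
  exists w : nat, 0 < w /\ ((c - 2) * (INR w + 1) < 2 * INR w + 1)%R.
Proof.
move=> [c_gt2 c_lt4].
have [N N_gt] := exists_nat_gt (/ (4 - c)).
exists N.+1; split => //; rewrite S_INR.
have N_ge0 : (0 <= INR N)%R by apply: pos_INR.
have inv_id : (/ (4 - c) * (4 - c) = 1)%R by field; lra.
have : (1 < (INR N + 1) * (4 - c))%R by nra.
nra.
Qed.

(* For k large and n = c k, the conditions needed on n and k hold: n >= 2k+1,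
   k >= t+2, and the ratio inequality at the bottom of the window of width t
   below k-1 (written without subtraction). *)
Lemma large_k_conditions (c : R) (w t : nat) : (2 < c < 4)%R ->
  ((c - 2) * (INR w + 1) < 2 * INR w + 1)%R ->
  exists k0 : nat, forall k n : nat, k0 < k -> INR n = (c * INR k)%R ->
    [/\ 2 * k + 1 <= n, t.+2 <= k &
        w.+1 * (n + t) + (2 * w + 1) * t <= (2 * w + 1) * k + w.+1 * (2 * k)].
Proof.
move=> [c_gt2 c_lt4] hw.
set d := (2 * INR w + 1 - (c - 2) * (INR w + 1))%R.
have d_gt0 : (0 < d)%R by rewrite /d; lra.
have [K K_gt] := exists_nat_gt ((3 * INR w + 2) * INR t / d).
exists (K + t.+2) => k n lt_k n_eq.
have K_le_k : (INR K <= INR k)%R by apply: le_INR; apply/leP; lia.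
have k_gt0 : (0 < INR k)%R by apply: lt_0_INR; apply/ltP; lia.
have t_ge0 : (0 <= INR t)%R by apply: pos_INR.
have w_ge0 : (0 <= INR w)%R by apply: pos_INR.
split.
- have : (INR (2 * k) < INR n)%R by rewrite INR_muln n_eq /=; nra.
  by move/INR_lt/ltP; lia.
- by lia.
- apply/leP; apply: INR_le.
  rewrite !(INR_muln, INR_addn) n_eq !S_INR INR_0.
  have : ((3 * INR w + 2) * INR t < d * INR k)%R.
    have e : ((3 * INR w + 2) * INR t / d * d = (3 * INR w + 2) * INR t)%R by field; lra.
    nra.
  rewrite /d; nra.
Qed.

Theorem mainTheorem2 (c : R) (hc : (2 < c < 4)%R) :
  exists k0 : nat, forall k n : nat, k0 < k -> INR n = (c * INR k)%R ->
    exists F : {set {set 'I_n}},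
      [/\ uniform k F, intersecting F &
          \sum_(0 <= l < k) 'C(n.-1, l) < #|diffs F| ].
Proof.
have [w [w_gt0 hw]] := exists_ratio_witness c hc.
have [t gap] := exists_power_gap w w_gt0.
have [k0 large] := large_k_conditions c w t hc hw.
exists k0 => k n lt_k n_eq.
have [n_ge t_le ratio] := large k n lt_k n_eq.
apply: hilton_milner_many_diffs; [lia | exact: n_ge |].
by apply: (@binomial_lt_lower_sum (n - k - 1) k.-1 w t w_gt0); lia.
Qed.
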